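(* If $\varphi_1$ and $\varphi_2$ are $\bigwedge\!\!\bigwedge$-formulas, then $\varphi_1\vee\varphi_2$ is logically equivalent to a $\bigwedge\!\!\bigwedge$-formula.
   Context: The $\bigwedge\!\!\bigwedge$-formulas (of a countable language) are defined inductively: every finitary quantifier-free formula is one; if $\varphi$ is one then so are $\exists x\,\varphi$ and $\forall x\,\varphi$; if $(\varphi_i)_{i\in\omega}$ are $\bigwedge\!\!\bigwedge$-formulas with finitely many free variables in total, then the countable conjunction $\bigwedge\!\!\bigwedge_{i\in\omega}\varphi_i$ (in $\mathcal{L}_{\omega_1\omega}$) is one. *)

From mathcomp Require Import all_boot.
Unset Printing Implicit Defensive.

Record signature := Signature {
  fsym : countType;
  farity : fsym -> nat;
  rsym : countType;
  rarity : rsym -> nat }.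

Section Infinitary.
Variable L : signature.

Inductive term : Type :=
  | Var (x : nat)
  | App (f : fsym L) (args : 'I_(farity L f) -> term).

Inductive formula : Type :=
  | FEq (t1 t2 : term)
  | FRel (r : rsym L) (args : 'I_(rarity L r) -> term)
  | FNot (phi : formula)
  | FAnd (phi psi : formula)
  | FOr (phi psi : formula)
  | FExists (x : nat) (phi : formula)
  | FForall (x : nat) (phi : formula)
  | FBigAnd (phis : nat -> formula)
  | FBigOr (phis : nat -> formula).

Inductive occurs (x : nat) : term -> Prop :=
  | occ_var : occurs x (Var x)
  | occ_app f args i : occurs x (args i) -> occurs x (App f args).

Inductive free (x : nat) : formula -> Prop :=
  | free_eq_l t1 t2 : occurs x t1 -> free x (FEq t1 t2)
  | free_eq_r t1 t2 : occurs x t2 -> free x (FEq t1 t2)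
  | free_rel r args i : occurs x (args i) -> free x (FRel r args)
  | free_not phi : free x phi -> free x (FNot phi)
  | free_and_l phi psi : free x phi -> free x (FAnd phi psi)
  | free_and_r phi psi : free x psi -> free x (FAnd phi psi)
  | free_or_l phi psi : free x phi -> free x (FOr phi psi)
  | free_or_r phi psi : free x psi -> free x (FOr phi psi)
  | free_ex y phi : x <> y -> free x phi -> free x (FExists y phi)
  | free_all y phi : x <> y -> free x phi -> free x (FForall y phi)
  | free_bigand phis i : free x (phis i) -> free x (FBigAnd phis)
  | free_bigor phis i : free x (phis i) -> free x (FBigOr phis).

Inductive qf_finitary : formula -> Prop :=
  | qf_eq t1 t2 : qf_finitary (FEq t1 t2)
  | qf_rel r args : qf_finitary (FRel r args)
  | qf_not phi : qf_finitary phi -> qf_finitary (FNot phi)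
  | qf_and phi psi : qf_finitary phi -> qf_finitary psi -> qf_finitary (FAnd phi psi)
  | qf_or phi psi : qf_finitary phi -> qf_finitary psi -> qf_finitary (FOr phi psi).

Definition finitely_many_free (phis : nat -> formula) : Prop :=
  exists N : nat, forall i x, free x (phis i) -> x < N.

Inductive WW : formula -> Prop :=
  | WW_qf phi : qf_finitary phi -> WW phi
  | WW_ex x phi : WW phi -> WW (FExists x phi)
  | WW_all x phi : WW phi -> WW (FForall x phi)
  | WW_bigand phis : (forall i, WW (phis i)) -> finitely_many_free phis ->
      WW (FBigAnd phis).

Record structure := Structure {
  dom : Type;
  dom_inhabited : inhabited dom;
  funI : forall f : fsym L, ('I_(farity L f) -> dom) -> dom;
  relI : forall r : rsym L, ('I_(rarity L r) -> dom) -> Prop }.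

Fixpoint eval {M : structure} (v : nat -> dom M) (t : term) : dom M :=
  match t with
  | Var x => v x
  | App f args => funI M f (fun i => eval v (args i))
  end.

Definition update {M : structure} (v : nat -> dom M) (x : nat) (d : dom M) :
  nat -> dom M := fun y => if y == x then d else v y.

Fixpoint sat {M : structure} (v : nat -> dom M) (phi : formula) : Prop :=
  match phi with
  | FEq t1 t2 => eval v t1 = eval v t2
  | FRel r args => relI M r (fun i => eval v (args i))
  | FNot phi => ~ sat v phi
  | FAnd phi psi => sat v phi /\ sat v psi
  | FOr phi psi => sat v phi \/ sat v psi
  | FExists x phi => exists d : dom M, sat (update v x d) phi
  | FForall x phi => forall d : dom M, sat (update v x d) phi
  | FBigAnd phis => forall i, sat v (phis i)
  | FBigOr phis => exists i, sat v (phis i)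
  end.

Definition log_equiv (phi psi : formula) : Prop :=
  forall (M : structure) (v : nat -> dom M), sat v phi <-> sat v psi.

End Infinitary.

Arguments Var {L} x.
Arguments App {L} f args.
Arguments FEq {L} t1 t2.
Arguments FRel {L} r args.
Arguments FNot {L} phi.
Arguments FAnd {L} phi psi.
Arguments FOr {L} phi psi.
Arguments FExists {L} x phi.
Arguments FForall {L} x phi.
Arguments FBigAnd {L} phis.
Arguments FBigOr {L} phis.
Arguments occurs {L} x t.
Arguments free {L} x phi.
Arguments qf_finitary {L} phi.
Arguments finitely_many_free {L} phis.
Arguments WW {L} phi.
Arguments log_equiv {L} phi psi.

From mathcomp Require Import all_boot.
From Stdlib Require Import Classical ClassicalEpsilon FunctionalExtensionality.

(* A disjunction is pushed through a ⋀⋀-formula one constructor at a time: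
   (∃x φ) ∨ ψ ≡ ∃y (φ[y/x] ∨ ψ) and (∀x φ) ∨ ψ ≡ ∀y (φ[y/x] ∨ ψ) for y free in
   neither φ nor ψ (the first uses that domains are nonempty, the second
   excluded middle), and (⋀ φ_i) ∨ ψ ≡ ⋀ (φ_i ∨ ψ).  Induction on φ reduces to
   quantifier-free φ, and the same induction on ψ then ends at the finitary
   quantifier-free φ ∨ ψ.  For the countable conjunctions to stay legitimate
   (finitely many free variables in total), the induction carries the
   invariant that the formula built for φ ∨ ψ has no free variables besides
   those of φ and ψ. *)

Section WW_disjunction.

Local Set Implicit Arguments.
Local Unset Strict Implicit.

Definition bounded (A : nat -> Prop) : Prop := exists N, forall z, A z -> z < N.

Lemma bounded_sub {A B : nat -> Prop} :
  (forall z, A z -> B z) -> bounded B -> bounded A.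
Proof. by move=> sAB [N ltN]; exists N => z /sAB /ltN. Qed.

Lemma boundedU (A B : nat -> Prop) :
  bounded A -> bounded B -> bounded (fun z => A z \/ B z).
Proof.
move=> [M ltM] [N ltN]; exists (maxn M N) => z [/ltM|/ltN] lt_z.
  by rewrite leq_max lt_z.
by rewrite leq_max lt_z orbT.
Qed.

Lemma bounded_bigcup_ord n (A : 'I_n -> nat -> Prop) :
  (forall i, bounded (A i)) -> bounded (fun z => exists i, A i z).
Proof.
move=> /fin_all_exists [N ltN]; exists (\max_i N i) => z [i /ltN lt_z].
exact: leq_trans lt_z (leq_bigmax i).
Qed.

Lemma bounded_image (f : nat -> nat) {A : nat -> Prop} :
  bounded A -> bounded (fun z => exists2 u, A u & z = f u).
Proof.
move=> [N ltN].
have fin : bounded (fun z => exists i : 'I_N, z = f i).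
  by apply: bounded_bigcup_ord => i; exists (f i).+1 => z ->.
by apply: bounded_sub fin => z [u /ltN lt_u ->]; exists (Ordinal lt_u).
Qed.

Lemma bounded_fresh (A : nat -> Prop) : bounded A -> exists y, ~ A y.
Proof. by move=> [N ltN]; exists N => /ltN; rewrite ltnn. Qed.

Lemma exists_or_r (T : Type) (P : T -> Prop) (Q : Prop) :
  inhabited T -> (exists d, P d) \/ Q <-> exists d, P d \/ Q.
Proof.
move=> [d0]; split=> [[[d Pd]|q]|[d [Pd|q]]];
  by [exists d; left | exists d0; right | left; exists d | right].
Qed.

Lemma forall_or_r (T : Type) (P : T -> Prop) (Q : Prop) :
  (forall d, P d) \/ Q <-> forall d, P d \/ Q.
Proof.
split=> [[allP d|q d]|PQ]; [by left|by right|].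
have [q|nq] := classic Q; [by right|left=> d].
by case: (PQ d).
Qed.

Definition swap (x y z : nat) : nat :=
  if z == x then y else if z == y then x else z.

Lemma swap_l x y : swap x y x = y.
Proof. by rewrite /swap eqxx. Qed.

Lemma swap_id x y z : z <> x -> z <> y -> swap x y z = z.
Proof. by rewrite /swap => /eqP/negbTE-> /eqP/negbTE->. Qed.

Lemma swapK x y : involutive (swap x y).
Proof.
move=> z; rewrite /swap; have [->|zx] := eqVneq z x.
  by rewrite eqxx; case: eqP.
by have [->|zy] := eqVneq z y; rewrite ?eqxx // (negbTE zx) (negbTE zy).
Qed.

Lemma swap_inj x y : injective (swap x y).
Proof. exact: inv_inj (swapK x y). Qed.

Variable L : signature.

Fixpoint rename_term (pi : nat -> nat) (t : term L) : term L :=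
  match t with
  | Var x => Var (pi x)
  | App f args => App f (fun i => rename_term pi (args i))
  end.

Fixpoint rename (pi : nat -> nat) (p : formula L) : formula L :=
  match p with
  | FEq t1 t2 => FEq (rename_term pi t1) (rename_term pi t2)
  | FRel r args => FRel r (fun i => rename_term pi (args i))
  | FNot p => FNot (rename pi p)
  | FAnd p q => FAnd (rename pi p) (rename pi q)
  | FOr p q => FOr (rename pi p) (rename pi q)
  | FExists x p => FExists (pi x) (rename pi p)
  | FForall x p => FForall (pi x) (rename pi p)
  | FBigAnd ps => FBigAnd (fun i => rename pi (ps i))
  | FBigOr ps => FBigOr (fun i => rename pi (ps i))
  end.

Fixpoint occurs_in (z : nat) (t : term L) : Prop :=
  match t with
  | Var x => z = x
  | App f args => exists i, occurs_in z (args i)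
  end.

Fixpoint free_in (z : nat) (p : formula L) : Prop :=
  match p with
  | FEq t1 t2 => occurs_in z t1 \/ occurs_in z t2
  | FRel r args => exists i, occurs_in z (args i)
  | FNot p => free_in z p
  | FAnd p q | FOr p q => free_in z p \/ free_in z q
  | FExists x p | FForall x p => z <> x /\ free_in z p
  | FBigAnd ps | FBigOr ps => exists i, free_in z (ps i)
  end.

Lemma occursE z t : occurs z t <-> occurs_in z t.
Proof.
split; first by elim=> [|f args i _ IH] //=; exists i.
elim: t => [x /= ->|f args IH [i /IH]]; [exact: occ_var | exact: occ_app].
Qed.

Lemma freeE z p : free z p <-> free_in z p.
Proof.
split.
  elim=> /=; try by [left|right|eauto].
  - by move=> t1 t2 /occursE; left.
  - by move=> t1 t2 /occursE; right.
  - by move=> r args i /occursE; exists i.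
elim: p => /=.
- by move=> t1 t2 [/occursE|/occursE]; [apply: free_eq_l|apply: free_eq_r].
- by move=> r args [i /occursE]; apply: free_rel.
- by move=> p IH /IH; apply: free_not.
- by move=> p IHp q IHq [/IHp|/IHq]; [apply: free_and_l|apply: free_and_r].
- by move=> p IHp q IHq [/IHp|/IHq]; [apply: free_or_l|apply: free_or_r].
- by move=> x p IH [ne /IH]; apply: free_ex.
- by move=> x p IH [ne /IH]; apply: free_all.
- by move=> ps IH [i /IH]; apply: free_bigand.
- by move=> ps IH [i /IH]; apply: free_bigor.
Qed.

Lemma finitely_many_freeP (ps : nat -> formula L) :
  finitely_many_free ps <-> bounded (fun z => exists i, free_in z (ps i)).
Proof.
split=> [[N ltN]|[N ltN]]; exists N.
  by move=> z [i /freeE /ltN].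
by move=> i z /freeE free_z; apply: ltN; exists i.
Qed.

Lemma occurs_in_rename pi z t :
  occurs_in z (rename_term pi t) -> exists2 u, occurs_in u t & z = pi u.
Proof.
elim: t => [x|f args IH] /=; first by move->; exists x.
by move=> [i /IH [u occ_u ->]]; exists u => //; exists i.
Qed.

Lemma free_in_rename pi z p :
  free_in z (rename pi p) -> exists2 u, free_in u p & z = pi u.
Proof.
elim: p z => /=.
- by move=> t1 t2 z [/occurs_in_rename[u ? ->]|/occurs_in_rename[u ? ->]];
    exists u; auto.
- by move=> r args z [i /occurs_in_rename[u ? ->]]; exists u => //; exists i.
- by [].
- by move=> p IHp q IHq z [/IHp[u ? ->]|/IHq[u ? ->]]; exists u; auto.
- by move=> p IHp q IHq z [/IHp[u ? ->]|/IHq[u ? ->]]; exists u; auto.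
- move=> x p IH z [ne /IH[u free_u eq_z]]; exists u => //.
  by split=> // eq_u; apply: ne; rewrite eq_z eq_u.
- move=> x p IH z [ne /IH[u free_u eq_z]]; exists u => //.
  by split=> // eq_u; apply: ne; rewrite eq_z eq_u.
- by move=> ps IH z [i /IH[u ? ->]]; exists u => //; exists i.
- by move=> ps IH z [i /IH[u ? ->]]; exists u => //; exists i.
Qed.

Lemma bounded_occurs_in t : bounded (occurs_in^~ t).
Proof.
elim: t => [x|f args IH]; first by exists x.+1 => z ->.
exact: bounded_bigcup_ord.
Qed.

Lemma bounded_free_in_qf p : qf_finitary p -> bounded (free_in^~ p).
Proof.
elim=> //= [t1 t2|r args|q1 q2 _ b1 _ b2|q1 q2 _ b1 _ b2]; try exact: boundedU.
- exact: boundedU (bounded_occurs_in t1) (bounded_occurs_in t2).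
- by apply: bounded_bigcup_ord => i; apply: bounded_occurs_in.
Qed.

Lemma bounded_free_in_WW p : WW p -> bounded (free_in^~ p).
Proof.
elim=> /= [q /bounded_free_in_qf //|x q _|x q _|ps _ _ /finitely_many_freeP //];
  by apply: bounded_sub => z [].
Qed.

Lemma qf_rename pi p : qf_finitary p -> qf_finitary (rename pi p).
Proof. by elim=> /=; constructor. Qed.

Lemma WW_rename pi p : WW p -> WW (rename pi p).
Proof.
elim=> /= [q /(qf_rename pi)|x q _|x q _|ps _ IH /finitely_many_freeP fin_ps].
- exact: WW_qf.
- exact: WW_ex.
- exact: WW_all.
apply: WW_bigand => //; apply/finitely_many_freeP.
apply: bounded_sub (bounded_image pi fin_ps).
by move=> z [i /free_in_rename[u free_u ->]]; exists u => //; exists i.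
Qed.

Section Semantics.

Variable M : structure L.

Lemma eval_rename (v : nat -> dom L M) pi t :
  eval L v (rename_term pi t) = eval L (v \o pi) t.
Proof.
elim: t => [x|f args IH] //=; congr funI.
by apply: functional_extensionality => i; apply: IH.
Qed.

Lemma update_comp_inj (v : nat -> dom L M) pi x d : injective pi ->
  update L v (pi x) d \o pi = update L (v \o pi) x d.
Proof.
move=> inj_pi; apply: functional_extensionality => z.
by rewrite /update /= (inj_eq inj_pi).
Qed.

Lemma sat_rename pi : injective pi ->
  forall p (v : nat -> dom L M), sat L v (rename pi p) <-> sat L (v \o pi) p.
Proof.
move=> inj_pi; elim=> /=.
- by move=> t1 t2 v; rewrite !eval_rename.
- move=> r args v; suff -> : (fun i => eval L v (rename_term pi (args i))) =
    (fun i => eval L (v \o pi) (args i)) by [].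
  by apply: functional_extensionality => i; apply: eval_rename.
- by move=> p IH v; rewrite IH.
- by move=> p IHp q IHq v; rewrite IHp IHq.
- by move=> p IHp q IHq v; rewrite IHp IHq.
- move=> x p IH v; have E d : sat L (update L v (pi x) d) (rename pi p) <->
    sat L (update L (v \o pi) x d) p by rewrite IH update_comp_inj.
  by split=> -[d /E]; exists d.
- move=> x p IH v; have E d : sat L (update L v (pi x) d) (rename pi p) <->
    sat L (update L (v \o pi) x d) p by rewrite IH update_comp_inj.
  by split=> sat_d d; apply/E.
- by move=> ps IH v; split=> sat_ps i; apply/IH.
- by move=> ps IH v; split=> -[i /IH]; exists i.
Qed.

Lemma eval_agree (v w : nat -> dom L M) t :
  (forall z, occurs_in z t -> v z = w z) -> eval L v t = eval L w t.
Proof.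
elim: t => [x|f args IH] /= vw; first exact: vw.
congr funI; apply: functional_extensionality => i.
by apply: IH => z occ_z; apply: vw; exists i.
Qed.

Lemma update_agree (v w : nat -> dom L M) x (p : formula L) :
  (forall z, z <> x /\ free_in z p -> v z = w z) ->
  forall d z, free_in z p -> update L v x d z = update L w x d z.
Proof.
by move=> vw d z free_z; rewrite /update; case: eqP => // zx; apply: vw.
Qed.

Lemma sat_agree (v w : nat -> dom L M) p :
  (forall z, free_in z p -> v z = w z) -> sat L v p <-> sat L w p.
Proof.
elim: p v w => /=.
- by move=> t1 t2 v w vw; rewrite !(@eval_agree v w) // => z ?; apply: vw; auto.
- move=> r args v w vw; suff -> : (fun i => eval L v (args i)) =
    (fun i => eval L w (args i)) by [].
  apply: functional_extensionality => i; apply: eval_agree => z occ_z.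
  by apply: vw; exists i.
- by move=> p IH v w vw; rewrite (IH v w).
- move=> p IHp q IHq v w vw.
  by rewrite (IHp v w) ?(IHq v w) // => z ?; apply: vw; auto.
- move=> p IHp q IHq v w vw.
  by rewrite (IHp v w) ?(IHq v w) // => z ?; apply: vw; auto.
- move=> x p IH v w /update_agree vw; have E d := IH _ _ (vw d).
  by split=> -[d /E]; exists d.
- move=> x p IH v w /update_agree vw; have E d := IH _ _ (vw d).
  by split=> sat_d d; apply/E.
- move=> ps IH v w vw; have E i : sat L v (ps i) <-> sat L w (ps i).
    by apply: IH => z ?; apply: vw; exists i.
  by split=> sat_ps i; apply/E.
- move=> ps IH v w vw; have E i : sat L v (ps i) <-> sat L w (ps i).
    by apply: IH => z ?; apply: vw; exists i.
  by split=> -[i /E]; exists i.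
Qed.

Lemma sat_update_fresh (v : nat -> dom L M) y d p :
  ~ free_in y p -> sat L (update L v y d) p <-> sat L v p.
Proof.
move=> yp; apply: sat_agree => z free_z; rewrite /update.
by case: eqP => // zy; rewrite zy in free_z.
Qed.

Lemma update_swap (v : nat -> dom L M) x y d z : z <> y ->
  (update L v y d \o swap x y) z = update L v x d z.
Proof.
rewrite /update /=; have [->|zx] := eqVneq z x; first by rewrite swap_l !eqxx.
by move=> zy; rewrite swap_id //; [case: eqP | apply/eqP].
Qed.

Lemma sat_rename_swap_or (v : nat -> dom L M) x y d p q chi :
  ~ free_in y p -> ~ free_in y q -> log_equiv (FOr p (rename (swap x y) q)) chi ->
  sat L (update L v y d) (rename (swap x y) chi) <->
  sat L (update L v x d) p \/ sat L v q.
Proof.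
move=> yp yq chiE; rewrite (sat_rename (@swap_inj x y)) -chiE /=.
rewrite (sat_rename (@swap_inj x y)).
have -> : update L v y d \o swap x y \o swap x y = update L v y d.
  by apply: functional_extensionality => z /=; rewrite swapK.
have swapped_p :
    sat L (update L v y d \o swap x y) p <-> sat L (update L v x d) p.
  by apply: sat_agree => z free_z; apply: update_swap => zy; rewrite zy in free_z.
by rewrite swapped_p (sat_update_fresh v d yq).
Qed.

End Semantics.

Implicit Types (p q a b chi : formula L) (ps : nat -> formula L).

Definition has_WW_or a b : Prop :=
  exists psi, [/\ WW psi, log_equiv (FOr a b) psi &
    forall z, free_in z psi -> free_in z a \/ free_in z b].

Lemma has_WW_orC a b : has_WW_or a b -> has_WW_or b a.
Proof.
move=> [psi [Wpsi psiE psi_free]]; exists psi; split=> // [M v|z /psi_free].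
  by rewrite -psiE /=; tauto.
tauto.
Qed.

Lemma has_WW_or_qf a b : qf_finitary a -> qf_finitary b -> has_WW_or a b.
Proof. by move=> qa qb; exists (FOr a b); split=> //; apply/WW_qf/qf_or. Qed.

Lemma exists_fresh_WW p q :
  WW p -> WW q -> exists y, ~ free_in y p /\ ~ free_in y q.
Proof.
move=> /bounded_free_in_WW bp /bounded_free_in_WW bq.
by have [y /not_or_and] := bounded_fresh (boundedU bp bq); exists y.
Qed.

Lemma free_in_rename_swap_or x y p q chi :
  ~ free_in y p ->
  (forall z, free_in z chi -> free_in z p \/ free_in z (rename (swap x y) q)) ->
  forall z, z <> y -> free_in z (rename (swap x y) chi) ->
  (z <> x /\ free_in z p) \/ free_in z q.
Proof.
move=> yp chi_free z zy /free_in_rename[u + eq_z]; subst z.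
move=> /chi_free[pu|/free_in_rename[w qw ->]]; last by rewrite swapK; right.
have uy : u <> y by move=> eq_uy; rewrite eq_uy in pu.
have [eq_ux|/eqP ux] := eqVneq u x; first by rewrite eq_ux swap_l in zy.
by rewrite swap_id //; left.
Qed.

(* The bound [x] is renamed to a fresh [y] by the transposition [swap x y];
   the hypothesis is used for the renamed [q], so that renaming the result
   back restores [q] itself. *)
Lemma has_WW_or_exists x p q : WW p -> WW q ->
  (forall pi, has_WW_or p (rename pi q)) -> has_WW_or (FExists x p) q.
Proof.
move=> Wp Wq IH; have [y [yp yq]] := exists_fresh_WW Wp Wq.
have [chi [Wchi chiE chi_free]] := IH (swap x y).
exists (FExists y (rename (swap x y) chi)); split.
- exact/WW_ex/WW_rename.
- move=> M v /=; rewrite exists_or_r; last exact: dom_inhabited.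
  have E d := sat_rename_swap_or v d yp yq chiE.
  by split=> -[d /E]; exists d.
- by move=> z /= [zy]; apply: free_in_rename_swap_or.
Qed.

Lemma has_WW_or_forall x p q : WW p -> WW q ->
  (forall pi, has_WW_or p (rename pi q)) -> has_WW_or (FForall x p) q.
Proof.
move=> Wp Wq IH; have [y [yp yq]] := exists_fresh_WW Wp Wq.
have [chi [Wchi chiE chi_free]] := IH (swap x y).
exists (FForall y (rename (swap x y) chi)); split.
- exact/WW_all/WW_rename.
- move=> M v /=; rewrite forall_or_r.
  have E d := sat_rename_swap_or v d yp yq chiE.
  by split=> sat_d d; apply/E.
- by move=> z /= [zy]; apply: free_in_rename_swap_or.
Qed.

Lemma has_WW_or_bigand ps q : finitely_many_free ps -> WW q ->
  (forall i, has_WW_or (ps i) q) -> has_WW_or (FBigAnd ps) q.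
Proof.
move=> /finitely_many_freeP fin_ps /bounded_free_in_WW bq.
move=> /choice[chi /all_and3[Wchi chiE chi_free]].
exists (FBigAnd chi); split.
- apply: WW_bigand => //; apply/finitely_many_freeP.
  apply: bounded_sub (boundedU fin_ps bq) => z [i /chi_free[]]; last by right.
  by left; exists i.
- move=> M v /=; rewrite forall_or_r.
  by split=> sat_i i; apply/chiE/sat_i.
- by move=> z /= [i /chi_free[]]; [left; exists i | right].
Qed.

(* Used twice: first with [C] the quantifier-free formulas, then with [C = WW]. *)
Lemma has_WW_or_from_qf (C : formula L -> Prop) :
  (forall pi b, C b -> C (rename pi b)) -> (forall b, C b -> WW b) ->
  (forall a b, qf_finitary a -> C b -> has_WW_or a b) ->
  forall a b, WW a -> C b -> has_WW_or a b.
Proof.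
move=> C_rename C_WW qf_case a b Wa; elim: Wa b => {a}.
- by move=> a qa b; apply: qf_case.
- move=> x p Wp IH b Cb; apply: has_WW_or_exists (C_WW _ Cb) _ => // pi.
  exact/IH/C_rename.
- move=> x p Wp IH b Cb; apply: has_WW_or_forall (C_WW _ Cb) _ => // pi.
  exact/IH/C_rename.
- move=> ps _ IH fin_ps b Cb; apply: has_WW_or_bigand (C_WW _ Cb) _ => // i.
  exact: IH.
Qed.

Lemma has_WW_or_qf_l a b : qf_finitary a -> WW b -> has_WW_or a b.
Proof.
move=> qa Wb; apply: has_WW_orC; apply: (@has_WW_or_from_qf qf_finitary) => //.
- by move=> pi c; apply: qf_rename.
- by move=> c; apply: WW_qf.
- by move=> c d qc qd; apply: has_WW_or_qf.
Qed.

Lemma has_WW_or_WW a b : WW a -> WW b -> has_WW_or a b.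
Proof.
apply: has_WW_or_from_qf => [pi c|//|c d].
  exact: WW_rename.
exact: has_WW_or_qf_l.
Qed.

End WW_disjunction.

Theorem lemma4p1 (L : signature) (phi1 phi2 : formula L) :
  WW phi1 -> WW phi2 ->
  exists psi : formula L, WW psi /\ log_equiv (FOr phi1 phi2) psi.
Proof.
by move=> W1 W2; have [psi [Wpsi psiE _]] := has_WW_or_WW W1 W2; exists psi.
Qed.
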